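(* Let $W=I_2(m)$, $m\ge3$. Writing $X^{(m)}_{\alpha\ldots}=\sum_{w\in W}q_w\delta_w$ with $q_w\in\mathcal{Q}$, the coefficient $c^{(m-2)}_{\alpha,\beta}$ of $\delta^{(m-2)}_{\alpha\ldots}$ equals $$c^{(m-2)}_{\alpha,\beta}=\begin{cases}\ \ \upsilon^{(2)}_\alpha\,S^{(0,m-2)}_\alpha(y_\alpha y_\beta),& m\text{ even},\\ -\upsilon^{(2)}_\alpha\,S^{(0,m-2)}_\alpha(y_\alpha y_\beta),& m\text{ odd}.\end{cases}$$ Symmetrically (interchanging $\alpha$ and $\beta$), the coefficient $c^{(m-2)}_{\beta,\alpha}$ of $\delta^{(m-2)}_{\beta\ldots}$ in $X^{(m)}_{\beta\ldots}$ is given by the same formula with $\alpha$ and $\beta$ interchanged.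
   Context: General setup: $W$ a finite real reflection group with root system $\Sigma$; $R$ an integral domain containing the ring $\mathcal{R}\subset\mathbb{R}$ generated by the coefficients of roots in the basis of simple roots; $F$ a one-dimensional commutative formal group law over $R$; $\mathcal{S}$ the formal root algebra (the quotient of the completed polynomial ring $R[[x_\lambda:\lambda\in\Lambda]]$, $\Lambda$ the lattice spanned by $\mathcal{R}$-multiples of roots, by the closed ideal generated by $x_0$ and the relations $x_{e_i\gamma+e_j\gamma'}=(e_ix_\gamma)+_F(e_jx_{\gamma'})$ for roots $\gamma,\gamma'$ and a fixed $\mathbb{Z}$-basis $(e_1=1,\dots,e_l)$ of $\mathcal{R}$), with $W$ acting by $w(x_\lambda)=x_{w(\lambda)}$; $\mathcal{Q}$ its localization at all $x_\gamma$; $\mathcal{Q}_W=\mathcal{Q}\otimes_RR[W]$ with left $\mathcal{Q}$-basis $\{\delta_w\}$ and product $(q\delta_w)(q'\delta_{w'})=q\,w(q')\delta_{ww'}$, $\mathbf 1=\delta_1$; $\delta_\gamma=\delta_{s_\gamma}$, $X_\gamma=\frac1{x_\gamma}(\mathbf 1-\delta_\gamma)$. Dihedral notation: $W=I_2(m)$, simple roots $\alpha,\beta$; $y_\gamma=1/x_\gamma\in\mathcal{Q}$; $W$ acts on products multiplicatively, e.g. $s(y_\alpha y_\beta)=s(y_\alpha)s(y_\beta)$, $s(y_\gamma)=y_{s(\gamma)}$. $X^{(i)}_{\alpha\ldots}=X_\alpha X_\beta X_\alpha\cdots$ ($i$ alternating factors), $X^{(i)}_{\beta\ldots}$, $\delta^{(i)}_{\alpha\ldots}=\delta_\alpha\delta_\beta\cdots$,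 $\delta^{(i)}_{\beta\ldots}$, $s^{(i)}_{\alpha\ldots}=s_\alpha s_\beta\cdots$, $s^{(i)}_{\beta\ldots}$ ($i$ factors; $i=0$ gives $\mathbf 1$ / identity). $\omega_j=\alpha$ for $j$ even, $\omega_j=\beta$ for $j$ odd. For $0\le i\le m-1$: $\upsilon^{(i)}_\alpha=\prod_{j=0}^{m-i-1}s^{(j)}_{\alpha\ldots}(y_{\omega_j})$ and $\upsilon^{(i)}_\beta=\prod_{j=0}^{m-i-1}s^{(j)}_{\beta\ldots}(y_{\omega_{j+1}})$ (empty product $=1$). For $i\le j$: $S^{(i,j)}_\alpha(u)=\sum_{k=i}^js^{(k)}_{\alpha\ldots}(u)$, $S^{(i,j)}_\beta(u)=\sum_{k=i}^js^{(k)}_{\beta\ldots}(u)$; an empty range ($j<i$) gives $0$. *)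

From HB Require Import structures.
From mathcomp Require Import all_boot all_order all_algebra all_fingroup.
Set Implicit Arguments. Unset Strict Implicit. Unset Printing Implicit Defensive.
Import GRing.Theory.
Local Open Scope ring_scope.

Definition ring_action (W : finGroupType) (Q : comUnitRingType)
    (act : W -> Q -> Q) : Prop :=
  [/\ forall w a b, act w (a + b) = act w a + act w b,
      forall w a b, act w (a * b) = act w a * act w b,
      forall w, act w 1 = 1,
      forall a, act 1%g a = a
    & forall u v a, act (u * v)%g a = act u (act v a)].

(* The twisted group ring Q_W = Q (x) R[W]: an element sum_w q_w delta_w is
   the finite function w |-> q_w.  Product: (q d_u)(q' d_v) = q u(q') d_{uv}. *)
Definition QW (W : finGroupType) (Q : comUnitRingType) := {ffun W -> Q}.

Definition tmul (W : finGroupType) (Q : comUnitRingType) (act : W -> Q -> Q)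
    (f g : QW W Q) : QW W Q :=
  [ffun w => \sum_(u : W) f u * act u (g (u^-1 * w)%g)].

Definition delta (W : finGroupType) (Q : comUnitRingType) (w0 : W) : QW W Q :=
  [ffun w => if w == w0 then 1 else 0].

Definition XX (W : finGroupType) (Q : comUnitRingType) (x : Q) (s : W) : QW W Q :=
  [ffun w => x^-1 * (delta Q 1%g w - delta Q s w)].

Fixpoint sword (W : finGroupType) (i : nat) (s t : W) : W :=
  if i is i'.+1 then (s * sword i' t s)%g else 1%g.

Fixpoint Xalt (W : finGroupType) (Q : comUnitRingType) (act : W -> Q -> Q)
    (i : nat) (xa xb : Q) (sa sb : W) : QW W Q :=
  if i is i'.+1 then tmul act (XX xa sa) (Xalt act i' xb xa sb sa)
  else delta Q 1%g.

Definition upsilon (W : finGroupType) (Q : comUnitRingType) (act : W -> Q -> Q)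
    (m i : nat) (ys yt : Q) (s t : W) : Q :=
  \prod_(j < m - i) act (sword j s t) (if odd j then yt else ys).

(* S^{(i,j)}(u) = sum_{k=i}^{j} (s t s ...)^{(k)} (u); 0 if j < i *)
Definition Ssum (W : finGroupType) (Q : comUnitRingType) (act : W -> Q -> Q)
    (i j : nat) (s t : W) (u : Q) : Q :=
  \sum_(i <= k < j.+1) act (sword k s t) u.

From HB Require Import structures.
From mathcomp Require Import all_boot all_order all_algebra all_fingroup.
From mathcomp Require Import cyclic zify ring.
Import GRing.Theory.
Local Open Scope ring_scope.
Set Implicit Arguments. Unset Strict Implicit. Unset Printing Implicit Defensive.

(* The coefficient of delta_w in X_s X_t X_s ... (i factors) is computed by
   peeling off the leftmost factor: since X_s = x_s^-1 (1 - delta_s),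
     coef_w (X_s Y) = x_s^-1 (coef_w Y - s (coef_{s^-1 w} Y)),
   where Y is the alternating product of length i - 1 starting with t.
   Two facts about the dihedral group generated by involutions s, t with
   st of order m >= 3 drive the computation:
   - normal forms: an alternating word of length k < m differs from every
     shorter alternating word, whichever letter that one starts with, and
   - support: the coefficients of an alternating product of length i live
     on alternating words of length <= i.
   Hence a product of length i < m - 1 starting with s has no component on
   the word (t s ...) of length i + 1, which kills one of the two terms of
   the recursion.
   Induction then gives, in order, the coefficient of a product of length i
   at its own word (a signed product of the y's), at the word of length
   i - 1 starting with the other letter, and finally at the word of length
   i - 2 starting with the same letter, which for i = m is Lemma 6.3.
   The file first develops the dihedral words (normal forms, distinctness),
   then the coefficient recursion and the three coefficient formulas, with
   upsilon^{(2)} appearing as the partial product yprod (m - 2). *)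

Section DihedralWords.

Variable W : finGroupType.

Definition dihedral_gens (m : nat) (s t : W) : Prop :=
  [/\ (s * s = 1)%g, (t * t = 1)%g & #[(s * t)%g]%g = m].

Lemma dihedral_gensC m s t : dihedral_gens m s t -> dihedral_gens m t s.
Proof.
case=> hs ht ho; split=> //.
by rewrite -orderV invgM (mulg1_eq hs) (mulg1_eq ht).
Qed.

Lemma sword_normal (s t : W) j :
  sword j s t = ((s * t) ^+ j./2 * s ^+ odd j)%g.
Proof.
suff two_steps : sword j s t = ((s * t) ^+ j./2 * s ^+ odd j)%g /\
    sword j.+1 s t = ((s * t) ^+ j.+1./2 * s ^+ odd j.+1)%g by case: two_steps.
elim: j => [|j [IHj IHj1]]; first by rewrite /= expg0 expg1 !mul1g mulg1.
split=> //; rewrite [sword j.+2 s t]/= mulgA IHj /= negbK.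
by rewrite mulgA -expgS.
Qed.

Lemma sword_normal_swap (s t : W) j : (s * s = 1)%g -> (t * t = 1)%g ->
  sword j t s = (((s * t) ^+ (j./2 + odd j))^-1 * s ^+ odd j)%g.
Proof.
move=> hs ht; have ts_inv : ((s * t)^-1 = t * s)%g.
  by rewrite invgM (mulg1_eq hs) (mulg1_eq ht).
rewrite sword_normal -ts_inv expgVn.
case: (odd j); rewrite ?addn0 ?addn1 ?expg0 ?mulg1 //.
by rewrite /= !expg1 expgS invMg ts_inv -!mulgA hs mulg1.
Qed.

Section Distinct.

Variables (m : nat) (s t : W).
Hypotheses (hm : (3 <= m)%N) (hst : dihedral_gens m s t).

(* The reflection s is not a rotation: otherwise s and t would commute and
   s t would have order at most 2. *)
Lemma reflection_notin_rotations : s \notin <[(s * t)%g]>%g.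
Proof.
case: hst => hs ht ho; apply/negP => /cycleP [n hn].
have comm_s : (s * (s * t) = s * t * s)%g by rewrite {1 4}hn -expgS -expgSr.
have comm_st : (t * s = s * t)%g.
  have e : (s * (s * t) * s = s * t * s * s)%g by rewrite comm_s.
  by rewrite mulgA hs mul1g -mulgA hs mulg1 in e.
have : ((s * t) ^+ 2 == 1)%g.
  by rewrite expgS expg1 mulgA -(mulgA s t s) comm_st mulgA hs mul1g ht.
by rewrite -order_dvdn ho => /dvdn_leq; lia.
Qed.

Lemma rotation_reflection_inj (u v : W) (b a : bool) :
  u \in <[(s * t)%g]>%g -> v \in <[(s * t)%g]>%g ->
  (u * s ^+ b = v * s ^+ a)%g -> b = a /\ u = v.
Proof.
move=> hu hv; have := reflection_notin_rotations.
case: b; case: a => /= hs e; rewrite ?expg1 ?expg0 ?mulg1 in e.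
- by split=> //; apply: (mulIg s).
- by case/negP: hs; move: (groupM (groupVr hu) hv); rewrite -e mulKg.
- by case/negP: hs; move: (groupM (groupVr hv) hu); rewrite e mulKg.
- by split.
Qed.

Lemma sword_distinct j k : (j < k)%N -> (k < m)%N ->
  sword k s t != sword j s t /\ sword k s t != sword j t s.
Proof.
case: hst => hs ht ho hjk hkm.
have hj := odd_double_half j; have hk := odd_double_half k.
rewrite -!muln2 in hj hk.
rewrite (sword_normal_swap j hs ht) !sword_normal; split; apply/eqP => e.
- have [eodd erot] := rotation_reflection_inj (mem_cycle _ _) (mem_cycle _ _) e.
  by move/eqP: erot; rewrite eq_expg_mod_order ho !modn_small; lia.
- have [eodd erot] :=
    rotation_reflection_inj (mem_cycle _ _) (groupVr (mem_cycle _ _)) e.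
  have : ((s * t) ^+ (k./2 + (j./2 + odd j)) == 1)%g by rewrite expgD erot mulVg.
  by rewrite -order_dvdn ho => /dvdn_leq; lia.
Qed.

End Distinct.

Lemma dihedral_gens_neq m (s t : W) : (3 <= m)%N -> dihedral_gens m s t ->
  [/\ s != 1, t != 1 & s != t]%g.
Proof.
move=> hm hst; have hm1 : (1 < m)%N by lia.
have [s_neq1 _] := sword_distinct hm hst (ltn0Sn 0) hm1.
have [t_neq1 _] := sword_distinct hm (dihedral_gensC hst) (ltn0Sn 0) hm1.
have [st_neq1 _] := sword_distinct hm hst (ltn0Sn 1) hm.
rewrite /= !mulg1 in s_neq1 t_neq1 st_neq1; split=> //.
by apply: contraNneq st_neq1 => ->; case: hst => _ -> _.
Qed.

End DihedralWords.

Section AlternatingProducts.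

Variables (W : finGroupType) (Q : comUnitRingType) (act : W -> Q -> Q).
Hypothesis hact : ring_action act.

Lemma act0 w : act w 0 = 0.
Proof. by case: hact => hD _ _ _ _; apply: (addrI (act w 0)); rewrite -hD !addr0. Qed.

Lemma act_sum w n (F : nat -> Q) :
  act w (\sum_(0 <= k < n) F k) = \sum_(0 <= k < n) act w (F k).
Proof. by case: hact => hD _ _ _ _; apply: (big_morph (act w) (hD w) (act0 w)). Qed.

Lemma act_prod w n (F : 'I_n -> Q) :
  act w (\prod_(k < n) F k) = \prod_(k < n) act w (F k).
Proof. by case: hact => _ hM h1 _ _; apply: (big_morph (act w) (hM w) (h1 w)). Qed.

Lemma act_sign w n : act w ((-1) ^+ n) = (-1) ^+ n.
Proof.
case: hact => hD hM h1 _ _.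
have actN1 : act w (-1) = -1.
  by apply/eqP; rewrite -addr_eq0 -[X in _ + X](h1 w) -hD addNr act0.
by elim: n => [|n IHn]; rewrite ?expr0 ?h1 // !exprS hM IHn actN1.
Qed.

Lemma sum_delta (c : Q) (v : W) (F : W -> Q) :
  \sum_(u : W) c * delta Q v u * F u = c * F v.
Proof.
rewrite (bigD1 v) //= big1 => [|u hu]; rewrite /delta ffunE ?eqxx ?(negbTE hu).
  by rewrite mulr1 addr0.
by rewrite mulr0 mul0r.
Qed.

(* Coefficientwise form of X_s Y = x_s^-1 (Y - delta_s Y). *)
Lemma Xalt_coefS i xs xt s t w :
  Xalt act i.+1 xs xt s t w = xs^-1 * Xalt act i xt xs t s w
     - xs^-1 * act s (Xalt act i xt xs t s (s^-1 * w)%g).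
Proof.
case: hact => _ _ _ act1 _.
rewrite [Xalt _ _.+1 _ _ _ _]/= /tmul ffunE.
under eq_bigr => u _ do rewrite /XX ffunE mulrBr mulrBl.
by rewrite sumrB !sum_delta invg1 mul1g act1.
Qed.

Lemma Xalt1_coef s t xs xt w :
  Xalt act 1 xs xt s t w = xs^-1 * (delta Q 1%g w - delta Q s w).
Proof.
case: hact => _ _ act_one _ _.
rewrite Xalt_coefS /= /delta !ffunE mulrBr; congr (_ - _ * _).
have -> : (s^-1 * w == 1)%g = (w == s) by rewrite -(inj_eq (mulgI s)) mulKVg mulg1.
by case: (w == s); rewrite ?act_one ?act0.
Qed.

Lemma Xalt_support i s t xs xt w : (s * s = 1)%g -> (t * t = 1)%g ->
  Xalt act i xs xt s t w != 0 ->
  exists2 j, (j <= i)%N & w = sword j s t \/ w = sword j t s.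
Proof.
elim: i s t xs xt w => [|i IHi] s t xs xt w hs ht.
  rewrite /= /delta ffunE; case: (eqVneq w 1%g) => [-> _|_]; last by rewrite eqxx.
  by exists 0%N => //; left.
rewrite Xalt_coefS.
have [/eqP w_in|/(IHi t s xt xs _ ht hs) [j hj hw] _] :=
  boolP (Xalt act i xt xs t s w == 0); last first.
  by exists j; [exact: leqW | case: hw; [right | left]].
have [/eqP sw_in|/(IHi t s xt xs _ ht hs) [j hj hw] _] :=
  boolP (Xalt act i xt xs t s (s^-1 * w)%g == 0).
  by rewrite w_in sw_in act0 !mulr0 subr0 eqxx.
have ew : w = (s * (s^-1 * w))%g by rewrite mulKVg.
case: hw => hw; first by exists j.+1 => //; left; rewrite ew hw.
case: j hj hw => [|j] hj hw; first by exists 1%N => //; left; rewrite ew hw.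
by exists j; [lia | right; rewrite ew hw /= mulgA hs mul1g].
Qed.

Variable m : nat.
Hypothesis hm : (3 <= m)%N.

(* By support and distinctness, a product of length i < m - 1 has no
   component on the alternating word of length i + 1 starting with t. *)
Lemma Xalt_coef_vanish i s t xs xt : dihedral_gens m s t -> (i.+1 < m)%N ->
  Xalt act i xs xt s t (sword i.+1 t s) = 0.
Proof.
move=> hst him; case: (hst) => hs ht _.
apply/eqP; apply: contraT => /(Xalt_support hs ht) [j hj hw].
have [neq_st neq_ts] :=
  sword_distinct hm (dihedral_gensC hst) (leq_ltn_trans hj (ltnSn i)) him.
by case: hw => hw; [move: neq_ts | move: neq_st]; rewrite hw eqxx.
Qed.

(* The first i factors of the product upsilon:
   prod_{j < i} (s t s ...)^{(j)} (ys or yt according to the parity of j). *)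
Definition yprod (i : nat) (ys yt : Q) (s t : W) : Q :=
  \prod_(j < i) act (sword j s t) (if odd j then yt else ys).

Lemma yprodS i ys yt s t : yprod i.+1 ys yt s t = ys * act s (yprod i yt ys t s).
Proof.
case: hact => _ _ _ act1 actM.
rewrite /yprod big_ord_recl /= act1 act_prod; congr (_ * _).
by apply: eq_bigr => j _; rewrite /= actM; case: (odd j).
Qed.

Lemma SsumS k s t u : Ssum act 0 k.+1 s t u = u + act s (Ssum act 0 k t s u).
Proof.
case: hact => _ _ _ act1 actM.
rewrite /Ssum big_nat_recl // /= act1 act_sum; congr (_ + _).
by apply: eq_bigr => j _; rewrite actM.
Qed.

Lemma Xalt_coef_top i s t xs xt : dihedral_gens m s t -> (i < m)%N ->
  Xalt act i xs xt s t (sword i s t) = (-1) ^+ i * yprod i xs^-1 xt^-1 s t.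
Proof.
case: hact => _ actM _ _ _.
elim: i s t xs xt => [|i IHi] s t xs xt hst him.
  by rewrite /= /delta ffunE eqxx /yprod big_ord0 mulr1.
have hts := dihedral_gensC hst.
rewrite Xalt_coefS (Xalt_coef_vanish xt xs hts him) [sword i.+1 s t]/= mulKg.
by rewrite IHi ?(ltnW him) // actM act_sign yprodS exprS; ring.
Qed.

Lemma Xalt_coef_below i s t xs xt : dihedral_gens m s t -> (i.+1 < m)%N ->
  Xalt act i.+1 xs xt s t (sword i t s)
    = xs^-1 * ((-1) ^+ i * yprod i xt^-1 xs^-1 t s).
Proof.
move=> hst him; have hts := dihedral_gensC hst.
case: hst => hs _ _.
rewrite Xalt_coefS (mulg1_eq hs) -[(s * sword i t s)%g]/(sword i.+1 s t).
rewrite (Xalt_coef_vanish xt xs hts him) act0 mulr0 subr0.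
by rewrite Xalt_coef_top // ltnW.
Qed.

Lemma Xalt_coef_two_below k s t xs xt : dihedral_gens m s t -> (k.+2 <= m)%N ->
  Xalt act k.+2 xs xt s t (sword k s t)
   = (-1) ^+ k * yprod k xs^-1 xt^-1 s t * Ssum act 0 k s t (xs^-1 * xt^-1).
Proof.
case: hact => _ actM _ act1 _.
elim: k s t xs xt => [|k IHk] s t xs xt hst hkm.
  have [s_neq1 t_neq1 s_neqt] := dihedral_gens_neq hm hst.
  case: (hst) => hs _ _.
  rewrite [sword 0 s t]/= Xalt_coefS !Xalt1_coef /delta !ffunE mulg1 (mulg1_eq hs).
  rewrite eqxx eq_sym (negbTE t_neq1) (negbTE s_neq1) (negbTE s_neqt) subrr.
  rewrite mulr0 act0 /yprod /Ssum big_ord0 big_nat1 /= act1.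
  by rewrite subr0 mulr0 subr0 expr0 !mul1r mulr1.
have hts := dihedral_gensC hst.
rewrite Xalt_coefS (Xalt_coef_below xt xs hts hkm) [sword k.+1 s t]/= mulKg.
rewrite IHk ?(ltnW hkm) // !actM act_sign yprodS SsumS [xt^-1 * xs^-1]mulrC.
by rewrite exprS; ring.
Qed.

End AlternatingProducts.

Lemma order2_involution (W : finGroupType) (s : W) : #[s]%g = 2%N -> (s * s = 1)%g.
Proof. by move=> h; have := expg_order s; rewrite h expgS expg1. Qed.

Theorem lemma6p3 (m : nat) (W : finGroupType) (sa sb : W)
    (Q : comUnitRingType) (act : W -> Q -> Q) (xa xb : Q) :
  (3 <= m)%N ->
  #[sa]%g = 2%N -> #[sb]%g = 2%N -> #[(sa * sb)%g]%g = m ->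
  <<[set sa; sb]>>%g = [set: W] ->
  ring_action act ->
  xa \is a GRing.unit -> xb \is a GRing.unit ->
  Xalt act m xa xb sa sb (sword (m - 2) sa sb)
    = (-1) ^+ odd m * upsilon act m 2 xa^-1 xb^-1 sa sb
        * Ssum act 0 (m - 2) sa sb (xa^-1 * xb^-1)
  /\
  Xalt act m xb xa sb sa (sword (m - 2) sb sa)
    = (-1) ^+ odd m * upsilon act m 2 xb^-1 xa^-1 sb sa
        * Ssum act 0 (m - 2) sb sa (xb^-1 * xa^-1).
Proof.
move=> hm ha2 hb2 ho _ hact _ _.
have hst : dihedral_gens m sa sb by split=> //; apply: order2_involution.
have Em : m = (m - 2).+2 by lia.
have hk : ((m - 2).+2 <= m)%N by rewrite -Em.
have sign_m : (-1) ^+ odd m = (-1) ^+ (m - 2) :> Q.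
  by rewrite signr_odd {1}Em !exprS !mulN1r opprK.
rewrite sign_m /upsilon -/(yprod act (m - 2) _ _ sa sb) -/(yprod act (m - 2) _ _ sb sa).
split; rewrite {1}Em.
- by rewrite (Xalt_coef_two_below hact hm xa xb hst hk).
- by rewrite (Xalt_coef_two_below hact hm xb xa (dihedral_gensC hst) hk).
Qed.
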